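(* Let $T$ be a CPTP map with operator-sum representation $\{M_k\}$, $\mathcal{H}_S$ an invariant subspace for which the DID construction terminates successfully, yielding $\mathcal{H}=\mathcal{H}_S\oplus\mathcal{H}_{T_1}\oplus\cdots\oplus\mathcal{H}_{T_N}$, and set $\mathcal{H}_{T_0}:=\mathcal{H}_S$. For $i=1,\dots,N$ let $\Pi_{T_j}$ be the orthogonal projection onto $\mathcal{H}_{T_j}$, $M_{k,P_i}=\Pi_{T_{i-1}}M_k|_{\mathcal{H}_{T_i}}:\mathcal{H}_{T_i}\to\mathcal{H}_{T_{i-1}}$, and $G_i=\sum_kM_{k,P_i}^\dagger M_{k,P_i}$, an operator on $\mathcal{H}_{T_i}$. Then $G_i$ is positive definite on $\mathcal{H}_{T_i}$, and for every density operator $\rho$ with $\Pi_{T_i}\rho\Pi_{T_i}=\rho$, $$\lambda_{\min}(G_i)\le \mathrm{Tr}(\Pi_{T_{i-1}}T(\rho))\le\lambda_{\max}(G_i)\le1,$$ where both bounds are attained by some such density operator.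
   Context: $\mathcal{H}$ is a finite-dimensional complex Hilbert space; $T$ is CPTP: $T(\rho)=\sum_kM_k\rho M_k^\dagger$, $\sum_kM_k^\dagger M_k=I$. A subspace $\mathcal{H}_S$ is invariant if $\rho\ge0$, $\mathrm{supp}(\rho)\subseteq\mathcal{H}_S$ implies $\mathrm{supp}(T(\rho))\subseteq\mathcal{H}_S$. DID construction: set $\mathcal{H}_{S_1}=\mathcal{H}_S$, $\mathcal{H}_{R_1}=\mathcal{H}_S^\perp$. At step $i$, let $M_{k,P'_i}=\Pi_{S_i}M_k|_{\mathcal{H}_{R_i}}:\mathcal{H}_{R_i}\to\mathcal{H}_{S_i}$ and $\mathcal{H}_{R_{i+1}}=\bigcap_k\ker(M_{k,P'_i})$. (1) If $\mathcal{H}_{R_{i+1}}=\mathcal{H}_{R_i}$, set $\mathcal{H}_{T_i}=\mathcal{H}_{R_i}$, stop (unsuccessful). (2) If $\mathcal{H}_{R_{i+1}}=\{0\}$, set $\mathcal{H}_{T_i}=\mathcal{H}_{R_i}$, stop (successful). (3) Otherwise $\mathcal{H}_{T_i}$ is the orthogonal complement of $\mathcal{H}_{R_{i+1}}$ in $\mathcal{H}_{R_i}$, $\mathcal{H}_{S_{i+1}}=\mathcal{H}_{S_i}\oplus\mathcal{H}_{T_i}$, iterate. $\lambda_{\min},\lambda_{\max}$ denote the least and largest eigenvalues. *)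

(* Finite-dimensional complex Hilbert space H = 'cV[C]_n,
   C an arbitrary numClosedFieldType (e.g. algC), inner product <u,v> = u^* v. *)
From HB Require Import structures.
From mathcomp Require Import all_boot all_order all_algebra.
Set Implicit Arguments. Unset Strict Implicit. Unset Printing Implicit Defensive.
Import Order.TTheory GRing.Theory Num.Theory.
Local Open Scope ring_scope.

Section Defs.
Variable C : numClosedFieldType.
Variable n : nat.

Definition adjmx (p q : nat) (A : 'M[C]_(p, q)) : 'M[C]_(q, p) :=
  (map_mx Num.conj A)^T.

Definition qform (A : 'M[C]_n) (v : 'cV[C]_n) : C := (adjmx v *m A *m v) 0 0.

Definition hermitian (A : 'M[C]_n) : Prop := adjmx A = A.

Definition psd (A : 'M[C]_n) : Prop :=
  hermitian A /\ forall v : 'cV[C]_n, 0 <= qform A v.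

Definition density (rho : 'M[C]_n) : Prop := psd rho /\ \tr rho = 1.

Definition is_proj (P : 'M[C]_n) : Prop := adjmx P = P /\ P *m P = P.

Definition in_sub (P : 'M[C]_n) (v : 'cV[C]_n) : Prop := P *m v = v.

Definition proj_onto (P : 'M[C]_n) (X : 'cV[C]_n -> Prop) : Prop :=
  is_proj P /\ forall v, in_sub P v <-> X v.

Definition channel (m : nat) (M : 'I_m -> 'M[C]_n) (rho : 'M[C]_n) : 'M[C]_n :=
  \sum_(k < m) M k *m rho *m adjmx (M k).

Definition kraus_TP (m : nat) (M : 'I_m -> 'M[C]_n) : Prop :=
  \sum_(k < m) adjmx (M k) *m M k = 1%:M.

Definition supp_in (P A : 'M[C]_n) : Prop := forall v, in_sub P (A *m v).

Definition invariant_subspace (m : nat) (M : 'I_m -> 'M[C]_n) (PS : 'M[C]_n) : Prop :=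
  forall rho, psd rho -> supp_in PS rho -> supp_in PS (channel M rho).

(* The DID construction terminates successfully after N steps, with
   Tp i the orthogonal projection onto H_{T_i} (1 <= i <= N).
   R i, Sp i are the orthogonal projections onto H_{R_i}, H_{S_i}. *)
Definition DID_success (m : nat) (M : 'I_m -> 'M[C]_n) (PS : 'M[C]_n)
    (N : nat) (Tp : nat -> 'M[C]_n) : Prop :=
  exists (R Sp : nat -> 'M[C]_n),
  [/\ Sp 1%N = PS,
      proj_onto (R 1%N) (fun v => PS *m v = 0),
      (1 <= N)%N /\
      (forall i, (1 <= i <= N)%N ->
         proj_onto (R i.+1)
           (fun v => in_sub (R i) v /\ forall k, Sp i *m (M k *m v) = 0)),
      (* case (3) at steps i < N *)
      (forall i, (1 <= i < N)%N ->
         [/\ R i.+1 <> R i, R i.+1 <> 0,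
             proj_onto (Tp i) (fun v => in_sub (R i) v /\ R i.+1 *m v = 0)
           & proj_onto (Sp i.+1)
               (fun v => exists a b, [/\ v = a + b, in_sub (Sp i) a
                                        & in_sub (Tp i) b])]) &
      (* case (2) at step N (case (1) not triggered) *)
      [/\ R N.+1 <> R N, R N.+1 = 0 & Tp N = R N]].

Definition Tproj (PS : 'M[C]_n) (Tp : nat -> 'M[C]_n) (i : nat) : 'M[C]_n :=
  if i is 0%N then PS else Tp i.

(* G_i = sum_k M_{k,P_i}^dagger M_{k,P_i}, with
   M_{k,P_i} = Pi_{T_{i-1}} M_k |_{H_{T_i}}, realized on H as
   Pi_{T_{i-1}} M_k Pi_{T_i}. *)
Definition Gop (m : nat) (M : 'I_m -> 'M[C]_n) (Pprev Pcur : 'M[C]_n) : 'M[C]_n :=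
  \sum_(k < m) adjmx (Pprev *m M k *m Pcur) *m (Pprev *m M k *m Pcur).

Definition eig_on (P G : 'M[C]_n) (l : C) : Prop :=
  exists v : 'cV[C]_n, [/\ in_sub P v, v != 0 & G *m v = l *: v].

Definition min_eig_on (P G : 'M[C]_n) (l : C) : Prop :=
  eig_on P G l /\ forall l', eig_on P G l' -> l <= l'.

Definition max_eig_on (P G : 'M[C]_n) (l : C) : Prop :=
  eig_on P G l /\ forall l', eig_on P G l' -> l' <= l.

Definition posdef_on (P G : 'M[C]_n) : Prop :=
  forall v : 'cV[C]_n, in_sub P v -> v != 0 -> 0 < qform G v.

End Defs.

(* For rho supported on H_{T_i}, cyclicity of the trace gives
   Tr(Pi_{T_{i-1}} T(rho)) = Tr(G_i rho), and <x, G_i x> = sum_k |Pi_{T_{i-1}} M_k x|^2.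
   A nonzero x in H_{T_i} lies in H_{R_i} but not in H_{R_{i+1}}, so some Pi_{S_i} M_k x
   is nonzero; since Pi_{S_{i-1}} M_k x = 0 and H_{S_i} is spanned by H_{S_{i-1}} and
   H_{T_{i-1}}, also Pi_{T_{i-1}} M_k x is nonzero, so G_i is positive definite on H_{T_i}.
   In an eigenbasis of G_i, Tr(G_i rho) is a convex combination of the nonzero
   eigenvalues, whence the bounds, attained at eigenvectors; lambda_max <= 1 because
   G_i <= sum_k M_k^dagger M_k = I. *)

From Pilot Require Import Defs.
From HB Require Import structures.
From mathcomp Require Import all_boot all_order all_algebra.
Import Order.TTheory GRing.Theory Num.Theory.
Local Open Scope ring_scope.
Set Implicit Arguments. Unset Strict Implicit.

Section Adjoint.
Variable C : numClosedFieldType.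

Lemma adjmxE p q (A : 'M[C]_(p, q)) i j : adjmx A i j = (A j i)^*.
Proof. by rewrite !mxE. Qed.

Lemma adjmx_tstar p q (A : 'M[C]_(p, q)) : (A ^t*)%sesqui = adjmx A.
Proof. by apply/matrixP => i j; rewrite !mxE. Qed.

Lemma adjmx_mul p q r (A : 'M[C]_(p, q)) (B : 'M[C]_(q, r)) :
  adjmx (A *m B) = adjmx B *m adjmx A.
Proof. by rewrite /adjmx map_mxM trmx_mul. Qed.

Lemma adjmxK p q (A : 'M[C]_(p, q)) : adjmx (adjmx A) = A.
Proof. by apply/matrixP => i j; rewrite !adjmxE conjCK. Qed.

Lemma adjmxD p q (A B : 'M[C]_(p, q)) : adjmx (A + B) = adjmx A + adjmx B.
Proof. by apply/matrixP => i j; rewrite !mxE rmorphD. Qed.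

Lemma adjmxB p q (A B : 'M[C]_(p, q)) : adjmx (A - B) = adjmx A - adjmx B.
Proof. by apply/matrixP => i j; rewrite !mxE rmorphB. Qed.

Lemma adjmxZ p q a (A : 'M[C]_(p, q)) : adjmx (a *: A) = a^* *: adjmx A.
Proof. by apply/matrixP => i j; rewrite !mxE rmorphM. Qed.

Lemma adjmx_sum p q m (F : 'I_m -> 'M[C]_(p, q)) :
  adjmx (\sum_k F k) = \sum_k adjmx (F k).
Proof.
apply/matrixP => i j; rewrite adjmxE !summxE rmorph_sum.
by apply: eq_bigr => k _; rewrite adjmxE.
Qed.

Lemma adjmx_col n (A : 'M[C]_n) j : adjmx (col j A) = row j (adjmx A).
Proof. by apply/matrixP => a b; rewrite !mxE. Qed.

End Adjoint.

Section SquaredNorm.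
Variables (C : numClosedFieldType) (n : nat).
Implicit Types (x y : 'cV[C]_n) (P Q : 'M[C]_n).

Definition sqnorm x : C := (adjmx x *m x) 0 0.

Lemma sqnormE x : sqnorm x = \sum_i x i 0 * (x i 0)^*.
Proof. by rewrite /sqnorm mxE; apply: eq_bigr => i _; rewrite adjmxE mulrC. Qed.

Lemma sqnorm_ge0 x : 0 <= sqnorm x.
Proof. by rewrite sqnormE; apply: sumr_ge0 => i _; exact: mul_conjC_ge0. Qed.

Lemma sqnorm_eq0 x : (sqnorm x == 0) = (x == 0).
Proof.
apply/idP/idP => [|/eqP->]; last by rewrite /sqnorm mulmx0 mxE.
rewrite sqnormE psumr_eq0 => [/allP x0|i _]; last exact: mul_conjC_ge0.
apply/eqP/matrixP => i j; rewrite ord1 mxE; apply/eqP.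
by rewrite -mul_conjC_eq0; apply: x0; rewrite mem_index_enum.
Qed.

Lemma sqnorm_gt0 x : (0 < sqnorm x) = (x != 0).
Proof. by rewrite lt_def sqnorm_ge0 andbT sqnorm_eq0. Qed.

Lemma qform1 x : qform 1%:M x = sqnorm x.
Proof. by rewrite /qform mulmx1. Qed.

Lemma qform_gram m (A : 'I_m -> 'M[C]_n) x :
  qform (\sum_k adjmx (A k) *m A k) x = \sum_k sqnorm (A k *m x).
Proof.
rewrite /qform mulmx_sumr mulmx_suml summxE; apply: eq_bigr => k _.
by rewrite /sqnorm adjmx_mul !mulmxA.
Qed.

Lemma proj_herm P : is_proj P -> adjmx P = P. Proof. by case. Qed.
Lemma proj_idem P : is_proj P -> P *m P = P. Proof. by case. Qed.

Lemma in_sub_proj P x : is_proj P -> in_sub P (P *m x).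
Proof. by move=> hP; rewrite /in_sub mulmxA proj_idem. Qed.

Lemma adjmx_in_sub P x : is_proj P -> in_sub P x -> adjmx x *m P = adjmx x.
Proof. by move=> hP hx; rewrite -[in RHS]hx adjmx_mul proj_herm. Qed.

Lemma in_sub_ortho P x y : is_proj P -> in_sub P x -> P *m y = 0 -> adjmx x *m y = 0.
Proof. by move=> hP hx hy; rewrite -(adjmx_in_sub hP hx) -mulmxA hy mulmx0. Qed.

(* Pythagoras for the decomposition [y = P y + (y - P y)]. *)
Lemma sqnorm_proj_le P y : is_proj P -> sqnorm (P *m y) <= sqnorm y.
Proof.
move=> hP; have split_y : adjmx y *m y =
    adjmx (P *m y) *m (P *m y) + adjmx (y - P *m y) *m (y - P *m y).
  rewrite adjmxB !adjmx_mul proj_herm // mulmxBl !mulmxBr !mulmxA.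
  by rewrite -[adjmx y *m P *m P]mulmxA proj_idem // subrr subr0 addrC subrK.
have -> : sqnorm y = sqnorm (P *m y) + sqnorm (y - P *m y) by rewrite /sqnorm split_y mxE.
by rewrite lerDl sqnorm_ge0.
Qed.

Lemma eq_mx_mulcV p (A B : 'M[C]_(p, n)) : (forall x, A *m x = B *m x) -> A = B.
Proof.
move=> AB; apply/matrixP => i j.
by have /matrixP/(_ i 0) := AB (delta_mx j 0); rewrite -!colE !mxE.
Qed.

Lemma proj_eq_range P Q : is_proj P -> is_proj Q ->
  (forall x, in_sub P x <-> in_sub Q x) -> P = Q.
Proof.
move=> hP hQ PQ.
have QP : Q *m P = P.
  by apply: eq_mx_mulcV => x; rewrite -mulmxA; apply/PQ/in_sub_proj.
have PQP : P *m Q = Q.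
  by apply: eq_mx_mulcV => x; rewrite -mulmxA; apply/PQ/in_sub_proj.
by rewrite -PQP -[P](proj_herm hP) -[Q in RHS](proj_herm hQ) -adjmx_mul QP.
Qed.

Lemma proj_neq0_in_sub P : is_proj P -> P != 0 -> exists2 x, in_sub P x & x != 0.
Proof.
move=> hP P_neq0; have /existsP[b Pb_neq0] : [exists b, col b P != 0].
  apply: contraNT P_neq0 => /existsPn Pb0; apply/eqP/matrixP => a b.
  by have /eqP/colP/(_ a) := negbNE (Pb0 b); rewrite !mxE.
by exists (col b P) => //; rewrite colE; apply: in_sub_proj.
Qed.

End SquaredNorm.

Section PureState.
Variables (C : numClosedFieldType) (n : nat).
Implicit Types (x : 'cV[C]_n) (P A : 'M[C]_n).

Definition pure_state x : 'M[C]_n := (sqnorm x)^-1 *: (x *m adjmx x).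

Lemma pure_state_density x : x != 0 -> density (pure_state x).
Proof.
move=> x0; have nx_gt0 : 0 < sqnorm x by rewrite sqnorm_gt0.
split; last by rewrite mxtraceZ mxtrace_mulC /mxtrace big_ord1 mulVf ?gt_eqF.
split; first by rewrite /Defs.hermitian adjmxZ adjmx_mul adjmxK geC0_conj ?invr_ge0 ?ltW.
move=> v; rewrite /qform -scalemxAr -scalemxAl mxE.
apply: mulr_ge0; first by rewrite invr_ge0 ltW.
rewrite !mulmxA -(mulmxA (adjmx v *m x)) mxE big_ord1.
rewrite -[(adjmx x *m v) 0 0]conjCK -adjmxE adjmx_mul adjmxK.
exact: mul_conjC_ge0.
Qed.

Lemma pure_state_supp P x : is_proj P -> in_sub P x -> P *m pure_state x *m P = pure_state x.
Proof.
move=> hP hx; rewrite -scalemxAr -scalemxAl.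
by rewrite mulmxA hx -mulmxA adjmx_in_sub.
Qed.

Lemma trace_mul_pure_state A x : \tr (A *m pure_state x) = qform A x / sqnorm x.
Proof.
by rewrite -scalemxAr mxtraceZ mulmxA mxtrace_mulC /mxtrace big_ord1 mulmxA mulrC.
Qed.

End PureState.

Section GramOperator.
Variables (C : numClosedFieldType) (n m : nat) (M : 'I_m -> 'M[C]_n) (P' P : 'M[C]_n).
Hypotheses (hP' : is_proj P') (hP : is_proj P).
Local Notation G := (Gop M P' P).

Lemma qform_Gop x : qform G x = \sum_k sqnorm (P' *m M k *m P *m x).
Proof. exact: qform_gram. Qed.

Lemma Gop_psd : psd G.
Proof.
split; last by move=> x; rewrite qform_Gop sumr_ge0 // => k _; exact: sqnorm_ge0.
by rewrite /Defs.hermitian adjmx_sum; apply: eq_bigr => k _; rewrite adjmx_mul adjmxK.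
Qed.

Lemma Gop_mulP : G *m P = G.
Proof.
rewrite mulmx_suml; apply: eq_bigr => k _.
by rewrite -mulmxA -(mulmxA _ P P) proj_idem.
Qed.

Lemma Gop_posdef :
  (forall x, in_sub P x -> x != 0 -> exists k, P' *m (M k *m x) != 0) ->
  posdef_on P G.
Proof.
move=> hM x xP x0; have [k hk] := hM x xP x0.
rewrite qform_Gop (bigD1 k) //= ltr_pwDl //.
  by rewrite sqnorm_gt0 -mulmxA xP -mulmxA.
by rewrite sumr_ge0 // => j _; exact: sqnorm_ge0.
Qed.

Lemma qform_Gop_le : kraus_TP M -> forall x, qform G x <= sqnorm x.
Proof.
move=> hK x; rewrite qform_Gop.
apply: (@le_trans _ _ (\sum_k sqnorm (M k *m (P *m x)))).
  by apply: ler_sum => k _; rewrite -!mulmxA sqnorm_proj_le.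
by rewrite -qform_gram hK qform1 sqnorm_proj_le.
Qed.

(* Heisenberg picture: by cyclicity of the trace, [P'] and the support projection [P] move onto the Kraus operators. *)
Lemma trace_proj_channel rho : P *m rho *m P = rho ->
  \tr (P' *m channel M rho) = \tr (G *m rho).
Proof.
move=> rhoP; rewrite mulmx_sumr mulmx_suml !raddf_sum /=; apply: eq_bigr => k _.
rewrite -{1}rhoP !mulmxA mxtrace_mulC !mulmxA mxtrace_mulC !mulmxA.
by rewrite !adjmx_mul (proj_herm hP) (proj_herm hP') !mulmxA -(mulmxA _ P' P') proj_idem.
Qed.

End GramOperator.

Section NormalSpectral.
Variables (C : numClosedFieldType) (n : nat) (A : 'M[C]_n).
Local Notation U := (spectralmx A).

Definition eigvec j : 'cV[C]_n := col j (adjmx U).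
Definition eigval j : C := spectral_diag A 0 j.

Lemma spectral_mul_adj : U *m adjmx U = 1%:M.
Proof. by have /unitarymxP := spectral_unitarymx A; rewrite adjmx_tstar. Qed.

Lemma adj_mul_spectral : adjmx U *m U = 1%:M.
Proof.
by rewrite -adjmx_tstar -invmx_unitary ?spectral_unitarymx // mulVmx ?spectral_unit.
Qed.

Lemma qform_eigvec B j : qform B (eigvec j) = (U *m B *m adjmx U) j j.
Proof.
rewrite /qform /eigvec adjmx_col adjmxK !mxE; apply: eq_bigr => k _.
by rewrite !mxE; congr (_ * _); apply: eq_bigr => l _; rewrite !mxE.
Qed.

Lemma sqnorm_eigvec j : sqnorm (eigvec j) = 1.
Proof. by rewrite -qform1 qform_eigvec mulmx1 spectral_mul_adj mxE eqxx. Qed.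

Lemma eigvec_neq0 j : eigvec j != 0.
Proof. by rewrite -sqnorm_eq0 sqnorm_eigvec oner_eq0. Qed.

Lemma sum_qform_eigvec B : \sum_j qform B (eigvec j) = \tr B.
Proof.
under eq_bigr do rewrite qform_eigvec.
by rewrite -[LHS]/(\tr _) mxtrace_mulC mulmxA adj_mul_spectral mul1mx.
Qed.

Hypothesis normalA : A \is normalmx.

Lemma spectral_decomp : A = adjmx U *m diag_mx (spectral_diag A) *m U.
Proof.
by have /orthomx_spectralP := normalA; rewrite invmx_unitary ?spectral_unitarymx ?adjmx_tstar.
Qed.

Lemma eigval_qform j : eigval j = qform A (eigvec j).
Proof.
rewrite qform_eigvec {2}spectral_decomp !mulmxA spectral_mul_adj mul1mx.
by rewrite -mulmxA spectral_mul_adj mulmx1 mxE eqxx mulr1n.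
Qed.

Lemma eigvecP j : A *m eigvec j = eigval j *: eigvec j.
Proof.
apply/matrixP => a b; rewrite ord1 {b}.
have AU : A *m adjmx U = adjmx U *m diag_mx (spectral_diag A).
  by rewrite {1}spectral_decomp -!mulmxA spectral_mul_adj mulmx1.
have -> : A *m eigvec j = col j (A *m adjmx U) by rewrite /eigvec !colE mulmxA.
by rewrite AU mul_mx_diag !mxE mulrC.
Qed.

Lemma trace_mul_eigvec B : \tr (A *m B) = \sum_j eigval j * qform B (eigvec j).
Proof.
rewrite {1}spectral_decomp -!mulmxA mxtrace_mulC -!mulmxA mul_diag_mx.
by apply: eq_bigr => j _; rewrite mxE qform_eigvec !mulmxA.
Qed.

End NormalSpectral.

Section SpectralBounds.
Variables (C : numClosedFieldType) (n : nat) (P G : 'M[C]_n).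
Hypotheses (hP : is_proj P) (psdG : psd G) (GP : G *m P = G) (posG : posdef_on P G).

Let hermG : adjmx G = G. Proof. by case: psdG. Qed.

Let normalG : G \is normalmx.
Proof. by apply/normalmxP; rewrite adjmx_tstar hermG. Qed.

Let PG : P *m G = G.
Proof. by rewrite -[in LHS]hermG -[in LHS](proj_herm hP) -adjmx_mul GP hermG. Qed.

Lemma eigval_ge0 j : 0 <= eigval G j.
Proof. by rewrite eigval_qform //; case: psdG. Qed.

Lemma eigvec_in_sub j : eigval G j != 0 -> in_sub P (eigvec G j).
Proof.
move=> ev_neq0; rewrite /in_sub.
have -> : eigvec G j = (eigval G j)^-1 *: (G *m eigvec G j).
  by rewrite eigvecP // scalerA mulVf // scale1r.
by rewrite -scalemxAr mulmxA PG.
Qed.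

Lemma proj_eigvec_eq0 j : eigval G j = 0 -> P *m eigvec G j = 0.
Proof.
move=> ev0; apply/eqP; apply: contraT => Pv_neq0.
have := posG (in_sub_proj _ hP) Pv_neq0.
by rewrite /qform -mulmxA (mulmxA G) GP eigvecP // ev0 scale0r mulmx0 mxE ltxx.
Qed.

Lemma qform_supp_eigvec_eq0 rho j :
  P *m rho *m P = rho -> eigval G j = 0 -> qform rho (eigvec G j) = 0.
Proof.
by move=> rhoP ev0; rewrite /qform -rhoP -!mulmxA proj_eigvec_eq0 // !mulmx0 mxE.
Qed.

(* [tr (G rho)] is a convex combination of the nonzero eigenvalues, with weights [<v_j, rho v_j>]. *)
Lemma trace_supp_between l1 l2 rho :
  (forall j, eigval G j != 0 -> l1 <= eigval G j <= l2) ->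
  density rho -> P *m rho *m P = rho -> l1 <= \tr (G *m rho) <= l2.
Proof.
move=> ev_between [[_ rho_ge0] tr1] rhoP.
have convex l : l = \sum_j l * qform rho (eigvec G j).
  by rewrite -mulr_sumr sum_qform_eigvec tr1 mulr1.
rewrite trace_mul_eigvec // [X in X <= _ <= _]convex [X in _ <= _ <= X]convex.
apply/andP; split; apply: ler_sum => j _.
all: have [ev0|/ev_between/andP[ev_ge ev_le]] := eqVneq (eigval G j) 0;
  first by rewrite qform_supp_eigvec_eq0 // !mulr0.
all: exact: ler_wpM2r.
Qed.

Lemma eig_on_between l1 l2 l :
  (forall j, eigval G j != 0 -> l1 <= eigval G j <= l2) ->
  eig_on P G l -> l1 <= l <= l2.
Proof.
move=> ev_between [y [yP y_neq0 Gy]].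
have := trace_supp_between ev_between (pure_state_density y_neq0) (pure_state_supp hP yP).
by rewrite trace_mul_pure_state /qform -mulmxA Gy -scalemxAr mxE mulfK ?sqnorm_eq0.
Qed.

Lemma exists_eigval_neq0 : P != 0 -> exists j, eigval G j != 0.
Proof.
move=> P_neq0; have [x xP x_neq0] := proj_neq0_in_sub hP P_neq0.
apply/existsP; apply: contraTT (posG xP x_neq0) => /existsPn ev0.
have : \tr (G *m pure_state x) = 0.
  by rewrite trace_mul_eigvec // big1 // => j _; rewrite (eqP (negbNE (ev0 j))) mul0r.
rewrite trace_mul_pure_state => /eqP; rewrite mulf_eq0 invr_eq0 sqnorm_eq0 (negPf x_neq0).
by rewrite orbF => /eqP->; rewrite ltxx.
Qed.

Lemma eig_on_eigvec j : eigval G j != 0 -> eig_on P G (eigval G j).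
Proof.
move=> ev_neq0; exists (eigvec G j).
by split; [exact: eigvec_in_sub | exact: eigvec_neq0 | exact: eigvecP].
Qed.

Lemma pure_eigvec_trace j : eigval G j != 0 ->
  exists rho, [/\ density rho, P *m rho *m P = rho & \tr (G *m rho) = eigval G j].
Proof.
move=> ev_neq0; exists (pure_state (eigvec G j)); split.
- exact/pure_state_density/eigvec_neq0.
- exact/pure_state_supp/eigvec_in_sub.
- by rewrite trace_mul_pure_state sqnorm_eigvec divr1 eigval_qform.
Qed.

Theorem eig_on_extrema : P != 0 -> exists lmin lmax,
  [/\ min_eig_on P G lmin, max_eig_on P G lmax,
      (forall rho, density rho -> P *m rho *m P = rho ->
         lmin <= \tr (G *m rho) <= lmax),
      (exists rho, [/\ density rho, P *m rho *m P = rho & \tr (G *m rho) = lmin])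
    & (exists rho, [/\ density rho, P *m rho *m P = rho & \tr (G *m rho) = lmax])].
Proof.
move=> P_neq0; have [j ev_j] := exists_eigval_neq0 P_neq0.
have ev_real : {in [pred i | eigval G i != 0], forall i, eigval G i \is Num.real}.
  by move=> i _; rewrite ger0_real ?eigval_ge0.
have [jmin ev_jmin jmin_le] := real_arg_minP (P := [pred i | eigval G i != 0]) ev_j ev_real.
have [jmax ev_jmax jmax_ge] := real_arg_maxP (P := [pred i | eigval G i != 0]) ev_j ev_real.
have ev_between i : eigval G i != 0 -> eigval G jmin <= eigval G i <= eigval G jmax.
  by move=> ev_i; apply/andP; split; [exact: jmin_le | exact: jmax_ge].
exists (eigval G jmin), (eigval G jmax); split.
- by split=> [|l /(eig_on_between ev_between)/andP[]//]; exact: eig_on_eigvec.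
- by split=> [|l /(eig_on_between ev_between)/andP[]//]; exact: eig_on_eigvec.
- by move=> rho; exact: trace_supp_between.
- exact: pure_eigvec_trace.
- exact: pure_eigvec_trace.
Qed.

End SpectralBounds.

Lemma proj_onto_sum_eq0 (C : numClosedFieldType) n (S A B : 'M[C]_n) (w : 'cV[C]_n) :
  is_proj A -> is_proj B ->
  proj_onto S (fun v => exists a b, [/\ v = a + b, in_sub A a & in_sub B b]) ->
  A *m w = 0 -> B *m w = 0 -> S *m w = 0.
Proof.
move=> hA hB [hS S_sum] Aw Bw; apply/eqP; rewrite -sqnorm_eq0.
have Sw_w : adjmx (S *m w) *m (S *m w) = adjmx (S *m w) *m w.
  by rewrite adjmx_mul proj_herm // mulmxA -(mulmxA _ S S) proj_idem.
have [a [b [Sw aA bB]]] := (S_sum (S *m w)).1 (in_sub_proj _ hS).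
rewrite /sqnorm Sw_w Sw adjmxD mulmxDl (in_sub_ortho hA aA Aw) (in_sub_ortho hB bB Bw).
by rewrite addr0 mxE.
Qed.

Section DIDSuccess.
Variables (C : numClosedFieldType) (n m : nat) (M : 'I_m -> 'M[C]_n) (PS : 'M[C]_n).
Variables (N : nat) (Tp R Sp : nat -> 'M[C]_n).
Hypotheses (hPS : is_proj PS) (Sp1 : Sp 1%N = PS) (R1 : proj_onto (R 1%N) (fun v => PS *m v = 0)).
Hypothesis R_next : forall i, (1 <= i <= N)%N ->
  proj_onto (R i.+1) (fun v => in_sub (R i) v /\ forall k, Sp i *m (M k *m v) = 0).
Hypothesis T_step : forall i, (1 <= i < N)%N ->
  [/\ R i.+1 <> R i, R i.+1 <> 0,
      proj_onto (Tp i) (fun v => in_sub (R i) v /\ R i.+1 *m v = 0)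
    & proj_onto (Sp i.+1)
        (fun v => exists a b, [/\ v = a + b, in_sub (Sp i) a & in_sub (Tp i) b])].
Hypotheses (RN_neq : R N.+1 <> R N) (RN0 : R N.+1 = 0) (TpN : Tp N = R N).

Lemma R_proj j : (1 <= j <= N.+1)%N -> is_proj (R j).
Proof.
case: j => [//|[_|j jN]]; first by case: R1.
by case: (@R_next j.+1 jN).
Qed.

Lemma Sp_proj j : (1 <= j <= N)%N -> is_proj (Sp j).
Proof.
case: j => [//|[_|j jN]]; first by rewrite Sp1.
by case: (@T_step j.+1 jN) => _ _ _ [].
Qed.

Lemma Tp_proj j : (1 <= j <= N)%N -> is_proj (Tp j).
Proof.
case/andP=> j_ge1; rewrite leq_eqVlt => /predU1P[jN|jN].
  by rewrite jN TpN; apply: R_proj; rewrite -jN j_ge1 leqnSn.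
have j_step : (1 <= j < N)%N by rewrite j_ge1.
by case: (T_step j_step) => _ _ [].
Qed.

Lemma Tproj_proj j : (j <= N)%N -> is_proj (Tproj PS Tp j).
Proof. by case: j => [//|j jN]; exact: Tp_proj. Qed.

Lemma in_sub_Tp i x : (1 <= i <= N)%N -> in_sub (Tp i) x ->
  in_sub (R i) x /\ (in_sub (R i.+1) x -> x = 0).
Proof.
case/andP=> i_ge1; rewrite leq_eqVlt => /predU1P[->|iN] xT.
  by move: xT; rewrite TpN /in_sub RN0 mul0mx; split=> // <-.
have i_step : (1 <= i < N)%N by rewrite i_ge1.
have [_ _ [_ T_def] _] := T_step i_step.
have [xR Rx0] := (T_def x).1 xT; split=> // xR'.
by rewrite -xR' Rx0.
Qed.

(* For [i < N], [T_i = {0}] would force [R_{i+1} = R_i], since [x - Pi_{R_{i+1}} x] lies in [T_i] for [x] in [R_i]. *)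
Lemma Tp_neq0 i : (1 <= i <= N)%N -> Tp i != 0.
Proof.
move=> hi; apply/eqP => Tp0; move: (hi); case/andP=> i_ge1.
rewrite leq_eqVlt => /predU1P[iN|iN].
  by apply: RN_neq; rewrite RN0 -TpN -iN Tp0.
have i_step : (1 <= i < N)%N by rewrite i_ge1.
have [R_neq _ [_ T_def] _] := T_step i_step.
have [Rnext_proj Rnext_def] := R_next hi.
apply: R_neq; apply: (proj_eq_range Rnext_proj (R_proj _)) => [|x].
  by rewrite i_ge1 leqW // ltnW.
split=> [/Rnext_def[]//|xR].
have : in_sub (Tp i) (x - R i.+1 *m x).
  apply/T_def; split; last by rewrite mulmxBr mulmxA (proj_idem Rnext_proj) subrr.
  by rewrite /in_sub mulmxBr xR; have [->] := (Rnext_def _).1 (in_sub_proj x Rnext_proj).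
rewrite /in_sub Tp0 mul0mx => /eqP; rewrite eq_sym subr_eq0 => /eqP->.
exact: in_sub_proj.
Qed.

Lemma Tproj_prev_M_neq0 i x : (1 <= i <= N)%N -> in_sub (Tp i) x -> x != 0 ->
  exists k, Tproj PS Tp i.-1 *m (M k *m x) != 0.
Proof.
move=> hi xT x_neq0; have [xR xRnext] := in_sub_Tp hi xT.
have [k Sp_Mx] : exists k, Sp i *m (M k *m x) != 0.
  apply/existsP; apply: contraNT x_neq0 => /existsPn Sp_Mx0; apply/eqP/xRnext.
  by apply/(R_next hi).2; split=> // k; apply/eqP/negbNE.
exists k; case: i hi xR Sp_Mx {xT xRnext} => [//|[_ _|i hi xR]]; first by rewrite Sp1.
have [_ _ [Tp_i_proj _] Sp_sum] := @T_step i.+1 hi.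
have [_ Rnext_def] := @R_next i.+1 (ltnW hi).
apply: contraNN => /eqP Tp_Mx0; apply/eqP.
apply: (proj_onto_sum_eq0 (@Sp_proj i.+1 (ltnW hi)) Tp_i_proj Sp_sum _ Tp_Mx0).
by have [_ ->] := (Rnext_def x).1 xR.
Qed.

End DIDSuccess.

Lemma DID_success_Tproj (C : numClosedFieldType) n m (M : 'I_m -> 'M[C]_n)
    (PS : 'M[C]_n) N (Tp : nat -> 'M[C]_n) i :
  is_proj PS -> DID_success M PS N Tp -> (1 <= i <= N)%N ->
  [/\ is_proj (Tproj PS Tp i), is_proj (Tproj PS Tp i.-1), Tproj PS Tp i != 0
    & forall x, in_sub (Tproj PS Tp i) x -> x != 0 ->
        exists k, Tproj PS Tp i.-1 *m (M k *m x) != 0].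
Proof.
move=> hPS [R [Sp [Sp1 R1 [_ R_next] T_step [RN_neq RN0 TpN]]]] hi.
have -> : Tproj PS Tp i = Tp i by case: i hi.
have [_ iN] := andP hi.
split.
- exact: (Tp_proj R1 R_next T_step TpN hi).
- exact: (Tproj_proj hPS R1 R_next T_step TpN (leq_trans (leq_pred i) iN)).
- exact: (Tp_neq0 R1 R_next T_step RN_neq RN0 TpN hi).
- by move=> x; apply: (Tproj_prev_M_neq0 hPS Sp1 R_next T_step RN0 TpN hi).
Qed.

Lemma eig_on_le1 (C : numClosedFieldType) n (P G : 'M[C]_n) l :
  (forall x, qform G x <= sqnorm x) -> eig_on P G l -> l <= 1.
Proof.
move=> G_le [y [_ y_neq0 Gy]]; have := G_le y.
rewrite /qform -mulmxA Gy -scalemxAr mxE -[X in _ <= X]mul1r.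
by rewrite ler_pM2r ?sqnorm_gt0.
Qed.

Unset Implicit Arguments.

Theorem mainTheorem6 (C : numClosedFieldType) (n m : nat)
    (M : 'I_m -> 'M[C]_n) (PS : 'M[C]_n) (N : nat) (Tp : nat -> 'M[C]_n) :
  kraus_TP M ->
  is_proj PS ->
  invariant_subspace M PS ->
  DID_success M PS N Tp ->
  forall i : nat, (1 <= i <= N)%N ->
  let G := Gop M (Tproj PS Tp i.-1) (Tproj PS Tp i) in
  posdef_on (Tproj PS Tp i) G /\
  exists lmin lmax : C,
  [/\ min_eig_on (Tproj PS Tp i) G lmin /\
      max_eig_on (Tproj PS Tp i) G lmax,
      (forall rho : 'M[C]_n, density rho ->
         Tproj PS Tp i *m rho *m Tproj PS Tp i = rho ->
         lmin <= \tr (Tproj PS Tp i.-1 *m channel M rho) <= lmax),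
      lmax <= 1,
      (exists rho : 'M[C]_n, [/\ density rho,
         Tproj PS Tp i *m rho *m Tproj PS Tp i = rho &
         \tr (Tproj PS Tp i.-1 *m channel M rho) = lmin])
    & (exists rho : 'M[C]_n, [/\ density rho,
         Tproj PS Tp i *m rho *m Tproj PS Tp i = rho &
         \tr (Tproj PS Tp i.-1 *m channel M rho) = lmax])].
Proof.
move=> hK hPS _ hD i hi G.
have [hP hP' P_neq0 Mx_neq0] := DID_success_Tproj hPS hD hi.
have posG : posdef_on (Tproj PS Tp i) G by apply: Gop_posdef.
have [lmin [lmax [hmin hmax bounds [rho_min min_spec] [rho_max max_spec]]]] :=
  eig_on_extrema hP (Gop_psd _ _ _) (Gop_mulP _ _ hP) posG P_neq0.
have trE rho : Tproj PS Tp i *m rho *m Tproj PS Tp i = rho ->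
    \tr (Tproj PS Tp i.-1 *m channel M rho) = \tr (G *m rho).
  exact: trace_proj_channel.
split=> //; exists lmin, lmax; split=> //.
- by move=> rho rho_dens rhoP; rewrite trE //; exact: bounds.
- exact: eig_on_le1 (qform_Gop_le hP' hP hK) hmax.1.
- by exists rho_min; case: min_spec => ? rhoP ?; rewrite trE.
- by exists rho_max; case: max_spec => ? rhoP ?; rewrite trE.
Qed.
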